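(* Let $k_1,k_2$ be positive integers with $k_1\le k_2$ and $k_1+k_2\ge 4$, and let $m$ be a positive integer such that there exists a perfect $B[-k_1,k_2](m)$ set. Suppose $p$ is a prime and $a>0$ an integer with $p\mid m$ and $a\mid p-1$. If $p\mid a(k_1+k_2)+1$ and $\lfloor k_1/p\rfloor+\lfloor k_2/p\rfloor=\lfloor (k_1+k_2)/p\rfloor$, then $a(k_1+k_2)+1\mid m$.
   Context: For a positive integer $q$, $\mathbb{Z}_q$ is the ring of integers modulo $q$. For integers $a\le b$, $[a,b]^\ast=\{a,a+1,\dots,b\}\setminus\{0\}$. For non-negative integers $0\le k_1\le k_2$ and a positive integer $q$, a set $B\subseteq\mathbb{Z}_q$ is a $B[-k_1,k_2](q)$ set (splitter set) if, for each $b\in B$, the set $\{ab \bmod q: a\in[-k_1,k_2]^\ast\}$ consists of $k_1+k_2$ distinct nonzero elements, and these sets are pairwise disjoint for distinct $b\in B$. Such a set is perfect if $|B|=(q-1)/(k_1+k_2)$; equivalently, every nonzero element of $\mathbb{Z}_q$ has a unique representation $ab$ with $a\in[-k_1,k_2]^\ast$, $b\in B$ (and $0$ has no such representation). *)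

From mathcomp Require Import all_boot all_order all_algebra.
Set Implicit Arguments. Unset Strict Implicit. Unset Printing Implicit Defensive.
Import GRing.Theory Num.Theory.
Local Open Scope ring_scope.

Definition coefs (k1 k2 : nat) : seq int :=
  [seq x <- [seq (i%:Z - k1%:Z) | i <- iota 0 (k1 + k2).+1] | x != 0].

Definition mulmod (q : nat) (a : int) (b : nat) : int := ((a * b%:Z) %% q%:Z)%Z.

Definition mult_set (k1 k2 q : nat) (b : nat) : seq int :=
  [seq mulmod q a b | a <- coefs k1 k2].

Definition splitter_set (k1 k2 q : nat) (B : seq nat) : Prop :=
  [/\ uniq B, all (fun b => (b < q)%N) B,
      (forall b, b \in B ->
         uniq (mult_set k1 k2 q b) /\ 0 \notin mult_set k1 k2 q b)
    & (forall b b', b \in B -> b' \in B -> b != b' ->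
         forall x, x \in mult_set k1 k2 q b -> x \notin mult_set k1 k2 q b')].

(* perfect: |B| = (q-1)/(k1+k2), i.e. |B| (k1+k2) = q - 1 *)
Definition perfect_splitter_set (k1 k2 q : nat) (B : seq nat) : Prop :=
  splitter_set k1 k2 q B /\ (size B * (k1 + k2) = q.-1)%N.

From mathcomp Require Import all_boot all_order all_algebra.
From mathcomp Require Import ring zify.
Import GRing.Theory Num.Theory.

Set Implicit Arguments.
Unset Strict Implicit.

(* If B is a perfect B[-k1,k2](m) splitter set, the products a*b mod m with
   a in [-k1,k2]^* and b in B run exactly once through 1, ..., m-1.  For a
   prime p dividing m, the residue a*b mod m is divisible by p iff p | a or
   p | b, so counting the residues NOT divisible by p in two ways gives
     (m/p) (p-1) = (k1 - k1/p + k2 - k2/p) * #{b in B : p does not divide b}.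
   Under the floor hypothesis the middle factor is n - n/p with n = k1 + k2.
   If moreover a | p-1 and p | a n + 1, then n = q p + (p-1)/a, which turns
   the identity into a m = (a n + 1) * #{...}; as a n + 1 is coprime to a,
   it divides m. *)

Lemma coefs_split k1 k2 :
  coefs k1 k2 = [seq (- Posz j)%R | j <- rev (iota 1 k1)] ++ [seq Posz j | j <- iota 1 k2].
Proof.
rewrite /coefs -addnS iotaD map_cat filter_cat /= subrr /= add0n -addn1 iotaDl -map_comp.
have -> : [seq (Posz i - Posz k1)%R | i <- iota 0 k1] = [seq (- Posz j)%R | j <- rev (iota 1 k1)].
  apply: (@eq_from_nth _ 0%R); first by rewrite !size_map size_rev !size_iota.
  move=> i; rewrite size_map size_iota => ik1.
  rewrite (nth_map 0%N) ?size_iota // (nth_map 0%N) ?size_rev ?size_iota //.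
  by rewrite nth_rev ?size_iota // !nth_iota; lia.
have -> : [seq ((fun i : nat => (Posz i - Posz k1)%R) \o addn k1) i | i <- iota 1 k2]
          = [seq Posz j | j <- iota 1 k2].
  by apply: eq_map => j /=; lia.
congr (_ ++ _); apply/all_filterP; rewrite all_map ?all_rev;
  by apply/allP => j; rewrite mem_iota /=; lia.
Qed.

Lemma size_coefs k1 k2 : size (coefs k1 k2) = (k1 + k2)%N.
Proof. by rewrite coefs_split size_cat !size_map size_rev !size_iota. Qed.

Lemma count_coefs_even (P : pred int) k1 k2 : (forall x, P (- x)%R = P x) ->
  count P (coefs k1 k2) =
  (count (fun j => P (Posz j)) (iota 1 k1) + count (fun j => P (Posz j)) (iota 1 k2))%N.
Proof.
move=> Peven; rewrite coefs_split count_cat !count_map count_rev.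
by congr (_ + _)%N; apply: eq_count => j /=; rewrite Peven.
Qed.

Lemma count_dvd_iota p k : (0 < p)%N ->
  count (fun i => p %| i)%N (iota 1 k) = (k %/ p)%N.
Proof.
move=> p0; elim: k => [|k IH]; first by rewrite div0n.
by rewrite -[k.+1]addn1 iotaD count_cat IH /= add1n addn0 addn1 (divnS _ p0) addnC.
Qed.

Lemma count_ndvd_iota p k : (0 < p)%N ->
  count (fun i => ~~ (p %| i))%N (iota 1 k) = (k - k %/ p)%N.
Proof.
move=> p0; rewrite -(count_dvd_iota k p0) -{2}[k](size_iota 1 k).
by rewrite -(count_predC (fun i => p %| i)%N) addKn.
Qed.

Definition nondiv (p : nat) : pred int := fun x => ~~ (Posz p %| x)%Z.

Lemma nondivN p x : nondiv p (- x)%R = nondiv p x.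
Proof. by rewrite /nondiv dvdzE abszN. Qed.

Lemma count_nondiv_coefs p k1 k2 : (0 < p)%N ->
  count (nondiv p) (coefs k1 k2) = (k1 - k1 %/ p + (k2 - k2 %/ p))%N.
Proof.
move=> p0; rewrite count_coefs_even; last exact: nondivN.
by rewrite -!(count_ndvd_iota _ p0).
Qed.

Lemma uniq_flatten_disjoint (I T : eqType) (f : I -> seq T) (s : seq I) :
  uniq s -> (forall i, i \in s -> uniq (f i)) ->
  (forall i j, i \in s -> j \in s -> i != j -> forall x, x \in f i -> x \notin f j) ->
  uniq (flatten [seq f i | i <- s]).
Proof.
elim: s => [|i s IH] //= /andP [i_s uniq_s] uniq_f disj.
rewrite cat_uniq uniq_f ?mem_head //= IH //; last first.
- by move=> j j' js j's; apply: disj; rewrite inE ?js ?j's orbT.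
- by move=> j js; apply: uniq_f; rewrite inE js orbT.
rewrite andbT; apply/hasPn => x /flattenP [_ /mapP [j js ->]] xj.
have ij : i != j by apply: contraNneq i_s => ->.
by apply: contraL xj; apply: disj; rewrite ?mem_head ?inE ?js ?orbT.
Qed.

Definition products (k1 k2 m : nat) (B : seq nat) : seq int :=
  flatten [seq mult_set k1 k2 m b | b <- B].

Lemma size_products k1 k2 m B : size (products k1 k2 m B) = (size B * (k1 + k2))%N.
Proof.
elim: B => [|b B IH] //=.
by rewrite size_cat IH size_map size_coefs mulSn.
Qed.

Lemma products_perm k1 k2 m B : (0 < m)%N -> perfect_splitter_set k1 k2 m B ->
  perm_eq (products k1 k2 m B) [seq Posz i | i <- iota 1 m.-1].
Proof.
move=> m0 [[uniq_B _ mult_ok disj] sizeB].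
have uniq_prod : uniq (products k1 k2 m B).
  by apply: uniq_flatten_disjoint => // b /mult_ok [].
have sub_prod : {subset products k1 k2 m B <= [seq Posz i | i <- iota 1 m.-1]}.
  move=> x /flattenP [_ /mapP [b bB ->]] xb.
  have x0 : x != 0%R by apply: contraTneq xb => ->; have [] := mult_ok b bB.
  case/mapP: xb => c _ ->{x} in x0 *.
  rewrite /mulmod in x0 *; set y := ((c * Posz b) %% Posz m)%Z in x0 *.
  have y_ge : (0 <= y)%R by apply: modz_ge0; lia.
  have y_lt : (y < Posz m)%R by apply: ltz_pmod; lia.
  apply/mapP; exists `|y|%N; last by lia.
  by rewrite mem_iota; lia.
have size_le : (size [seq Posz i | i <- iota 1 m.-1] <= size (products k1 k2 m B))%N.
  by rewrite size_products sizeB size_map size_iota.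
apply: uniq_perm => //; first by rewrite map_inj_uniq ?iota_uniq // => i j [].
by have [] := uniq_min_size uniq_prod sub_prod size_le.
Qed.

Lemma dvdz_modz_dvd (d m : nat) (x : int) : (d %| m)%N ->
  (Posz d %| (x %% Posz m)%Z)%Z = (Posz d %| x)%Z.
Proof.
move=> dm; have dvd_mult : (Posz d %| ((x %/ Posz m)%Z * Posz m)%R)%Z.
  by apply: dvdz_mull; rewrite dvdzE !absz_nat.
by rewrite [in RHS](divz_eq x (Posz m)) (rpredDl _ dvd_mult).
Qed.

Lemma nondiv_mulmod p m (x : int) b : prime p -> (p %| m)%N ->
  nondiv p (mulmod m x b) = nondiv p x && ~~ (p %| b)%N.
Proof.
move=> pp pm; rewrite /nondiv /mulmod dvdz_modz_dvd //.
by rewrite dvdzE abszM absz_nat Euclid_dvdM // negb_or.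
Qed.

Lemma count_nondiv_products k1 k2 m B p : prime p -> (p %| m)%N ->
  count (nondiv p) (products k1 k2 m B) =
  (count (nondiv p) (coefs k1 k2) * count (fun b => ~~ (p %| b))%N B)%N.
Proof.
move=> pp pm; elim: B => [|b B IH] /=; first by rewrite muln0.
rewrite count_cat IH /mult_set count_map mulnDr.
under eq_count do rewrite /= nondiv_mulmod //.
congr (_ + _)%N; case: (p %| b)%N; rewrite /= ?muln0 ?muln1.
- by rewrite (@eq_count _ _ pred0) ?count_pred0 // => x; rewrite andbF.
- by apply: eq_count => x; rewrite andbT.
Qed.

Lemma pred_sub_div p m : (0 < m)%N -> (p %| m)%N ->
  (m.-1 - m.-1 %/ p = m %/ p * p.-1)%N.
Proof.
move=> m0 /dvdnP [t m_eq].
have /andP [t0 p0] : (0 < t)%N && (0 < p)%N by rewrite -muln_gt0 -m_eq.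
have -> : m.-1 = (t.-1 * p + p.-1)%N by rewrite m_eq; nia.
rewrite divnMDl // divn_small ?addn0; last by rewrite prednK.
by rewrite m_eq mulnK //; nia.
Qed.

Lemma perfect_count_nondiv k1 k2 m B p : (0 < m)%N -> prime p -> (p %| m)%N ->
  perfect_splitter_set k1 k2 m B ->
  (m %/ p * p.-1 = (k1 - k1 %/ p + (k2 - k2 %/ p)) * count (fun b => ~~ (p %| b))%N B)%N.
Proof.
move=> m0 pp pm perfB; have p0 := prime_gt0 pp.
rewrite -count_nondiv_coefs // -(count_nondiv_products _ _ _ pp pm).
rewrite (permP (products_perm m0 perfB)) count_map -pred_sub_div //.
by rewrite -count_ndvd_iota //; apply: eq_count.
Qed.

Lemma pred_divK p a : (0 < p)%N -> (a %| p.-1)%N -> p = (p.-1 %/ a * a + 1)%N.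
Proof. by move=> p0 ap; rewrite divnK // addn1 prednK. Qed.

(* If a | p-1 and a n = -1 mod p, then n = (p-1)/a mod p, since a is invertible mod p. *)
Lemma residue_of_inverse p a n : prime p -> (0 < a)%N -> (a %| p.-1)%N ->
  (p %| a * n + 1)%N -> (n %% p = p.-1 %/ a)%N.
Proof.
move=> pp a0 ap pn; set c := (p.-1 %/ a)%N.
have p_eq : p = (c * a + 1)%N by rewrite -pred_divK // prime_gt0.
have a_lt_p : (a < p)%N by have := prime_gt1 pp; have := @dvdn_leq a p.-1; lia.
have cop : coprimez (Posz p) (Posz a).
  by rewrite coprimezE !absz_nat prime_coprime // gtnNdvd.
have : (Posz p %| (Posz a * (Posz n - Posz c))%R)%Z.
  have -> : (Posz a * (Posz n - Posz c) = Posz (a * n + 1) - Posz p)%R by rewrite p_eq; lia.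
  by apply: rpredB; rewrite dvdzE !absz_nat.
rewrite Gauss_dvdzr // -eqz_mod_dvd !modz_nat => /eqP [->].
by rewrite modn_small // p_eq; nia.
Qed.

Lemma divisor_from_count p a n m u : prime p -> (0 < a)%N -> (a %| p.-1)%N ->
  (p %| a * n + 1)%N -> (p %| m)%N -> (m %/ p * p.-1 = (n - n %/ p) * u)%N ->
  (a * n + 1 %| m)%N.
Proof.
move=> pp a0 ap pn pm count_eq.
have n_mod := residue_of_inverse pp a0 ap pn.
set c := (p.-1 %/ a)%N in n_mod.
have p_eq : p = (c * a + 1)%N by rewrite -pred_divK // prime_gt0.
have pred_p : p.-1 = (c * a)%N by rewrite {1}p_eq addn1.
have c0 : (0 < c)%N by rewrite lt0n; apply: contraTneq (prime_gt1 pp) => c_0; rewrite p_eq c_0.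
set q := (n %/ p)%N in count_eq; set t := (m %/ p)%N in count_eq.
have n_eq : n = (q * p + c)%N by rewrite {1}(divn_eq n p) n_mod.
have sub_eq : (n - q = c * (a * q + 1))%N.
  by rewrite n_eq p_eq -(addKn q (c * (a * q + 1))); congr (_ - _); ring.
have t_eq : (t * a = (a * q + 1) * u)%N.
  apply/eqP; rewrite -(eqn_pmul2l c0); apply/eqP.
  by move: count_eq; rewrite pred_p sub_eq; lia.
have pn_eq : (a * n + 1 = p * (a * q + 1))%N by rewrite n_eq p_eq; ring.
have am_eq : (a * m = (a * n + 1) * u)%N.
  by rewrite -(divnK pm) -/t pn_eq mulnA (mulnC a t) t_eq; ring.
have : (a * n + 1 %| a * m)%N by rewrite am_eq dvdn_mulr.
by rewrite Gauss_dvdr // coprime_sym /coprime mulnC gcdnMDl gcdn1.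
Qed.

Theorem corollary3p5 (k1 k2 m p a : nat) :
  (0 < k1)%N -> (k1 <= k2)%N -> (4 <= k1 + k2)%N -> (0 < m)%N ->
  (exists B : seq nat, perfect_splitter_set k1 k2 m B) ->
  prime p -> (0 < a)%N -> (p %| m)%N -> (a %| p.-1)%N ->
  (p %| a * (k1 + k2) + 1)%N ->
  (k1 %/ p + k2 %/ p = (k1 + k2) %/ p)%N ->
  (a * (k1 + k2) + 1 %| m)%N.
Proof.
move=> _ _ _ m0 [B perfB] pp a0 pm ap pn floor_eq.
apply: (divisor_from_count (u := count (fun b => ~~ (p %| b))%N B) pp a0 ap pn pm).
rewrite (perfect_count_nondiv m0 pp pm perfB) -floor_eq.
congr (_ * _)%N.
by rewrite subnDA -addnBAC ?leq_div // addnBA ?leq_div.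
Qed.
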